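(* Let $\mathbf Q\in\mathbb R^{m\times d}$, $\mathbf K,\mathbf V\in\mathbb R^{n\times d}$ and $\beta>0$, and let $\mathbf A$, $\mathbf D$, $\mathbf O$ be as in the context. Let $\widehat{\mathbf A}\in\mathbb R^{m\times n}$ be any approximation to $\mathbf A$, let $\widehat{\mathbf D}=\mathrm{diag}(\widehat{\mathbf A}\mathbf 1_n)$, and let $\widehat{\mathbf O}\defeq\mathrm{clip}(\widehat{\mathbf D}^{-1}\widehat{\mathbf A}\mathbf V,\mathbf v_{\min},\mathbf v_{\max})$, where $(\mathbf v_{\min})_j=\min_{l\in[n]}\mathbf V_{lj}$ and $(\mathbf v_{\max})_j=\max_{l\in[n]}\mathbf V_{lj}$. Then $$\|\mathbf O-\widehat{\mathbf O}\|_{\max}\le \|\mathbf V\|_{\max}\,\min\left(\frac{\frac{3}{\sqrt n}\|\mathbf A-\widehat{\mathbf A}\|_{2,\infty}}{\min_{i\in[m],j\in[n]}\mathbf A_{ij}},\,2\right).$$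
   Context: Queries $\mathbf Q\in\mathbb R^{m\times d}$ have rows $\mathbf q_1,\dots,\mathbf q_m$; keys $\mathbf K\in\mathbb R^{n\times d}$ have rows $\mathbf k_1,\dots,\mathbf k_n$; values $\mathbf V\in\mathbb R^{n\times d}$ have rows $\mathbf v_1,\dots,\mathbf v_n$. The attention matrix is $\mathbf A\in\mathbb R^{m\times n}$ with $\mathbf A_{il}=\exp(\beta\langle\mathbf q_i,\mathbf k_l\rangle)$, $\mathbf D=\mathrm{diag}(\mathbf A\mathbf 1_n)$, and the softmax matrix is $\mathbf O=\mathbf D^{-1}\mathbf A\mathbf V$. $\mathrm{clip}(\mathbf M,\mathbf a,\mathbf b)$ clips each entry $\mathbf M_{ij}$ to the interval $[\mathbf a_j,\mathbf b_j]$. Norms: $\|\mathbf M\|_{\max}=\max_{i,j}|\mathbf M_{ij}|$ and $\|\mathbf M\|_{2,\infty}=\max_i\|\mathbf M_{i,:}\|_2$ (maximal Euclidean row norm). *)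

From HB Require Import structures.
From mathcomp Require Import all_boot all_order all_algebra.
From mathcomp Require Import all_boot all_order all_algebra.
From mathcomp Require Import all_classical all_reals all_analysis.
Set Implicit Arguments. Unset Strict Implicit. Unset Printing Implicit Defensive.
Import Order.TTheory GRing.Theory Num.Theory.
Local Open Scope ring_scope.

Section Defs.
Variable R : realType.

Definition attn (m n d : nat) (beta : R) (Q : 'M[R]_(m, d)) (K : 'M[R]_(n, d))
  : 'M[R]_(m, n) :=
  \matrix_(i, l) expR (beta * \sum_(k < d) Q i k * K l k).

Definition rowsum_diag (m n : nat) (M : 'M[R]_(m, n)) : 'M[R]_m :=
  diag_mx (\row_(i < m) \sum_(l < n) M i l).

Definition clip (m d : nat) (M : 'M[R]_(m, d)) (a b : 'rV[R]_d) : 'M[R]_(m, d) :=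
  \matrix_(i, j) Num.min (Num.max (M i j) (a 0 j)) (b 0 j).

Definition colmin (n d : nat) (V : 'M[R]_(n.+1, d)) : 'rV[R]_d :=
  \row_j \big[Num.min/ V ord0 j]_(l < n.+1) V l j.
Definition colmax (n d : nat) (V : 'M[R]_(n.+1, d)) : 'rV[R]_d :=
  \row_j \big[Num.max/ V ord0 j]_(l < n.+1) V l j.

Definition minentry (m n : nat) (M : 'M[R]_(m.+1, n.+1)) : R :=
  \big[Num.min/ M ord0 ord0]_(i < m.+1) \big[Num.min/ M ord0 ord0]_(j < n.+1) M i j.

Definition maxnorm (m n : nat) (M : 'M[R]_(m, n)) : R :=
  \big[Num.max/0]_(i < m) \big[Num.max/0]_(j < n) `|M i j|.

Definition norm2inf (m n : nat) (M : 'M[R]_(m, n)) : R :=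
  \big[Num.max/0]_(i < m) Num.sqrt (\sum_(j < n) M i j ^+ 2).

End Defs.

(* Each row of O averages the values V_lj with positive weights A_il, so O and
   the clipped estimate both lie in the box [v_min, v_max]: this is the bound
   2 ||V||_max.  For one row, with e = A_i - Ahat_i, the unclipped estimate x
   satisfies (x - o) * sum Ahat_i = sum_l e_l (o - V_lj); splitting e into its
   positive and negative parts bounds the right-hand side by the distances from
   o to the two ends of the box, and clipping absorbs the small denominator
   sum Ahat_i = sum A_i - sum e.  The result is
   |o - clip x| <= (v_max - v_min) ||e||_1 / sum A_i, and
   ||e||_1 <= sqrt n ||e||_2, sum A_i >= n min A give the claim (even with the
   constant 2 in place of 3). *)

From HB Require Import structures.
From mathcomp Require Import all_boot all_order all_algebra.
From mathcomp Require Import all_classical all_reals all_analysis.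
From mathcomp Require Import ring lra.
Set Implicit Arguments. Unset Strict Implicit. Unset Printing Implicit Defensive.
Import Order.TTheory GRing.Theory Num.Theory.
Local Open Scope ring_scope.

Section Clamp.
Variable R : realFieldType.
Implicit Types lo hi u x a b z t E S : R.

Definition clamp lo hi x := Num.min (Num.max x lo) hi.

Lemma clamp_in lo hi x : lo <= hi -> lo <= clamp lo hi x <= hi.
Proof. by move=> lo_hi; rewrite le_min le_max lexx orbT lo_hi ge_min lexx orbT. Qed.

Lemma clamp_subr lo hi u x : lo <= u <= hi -> u <= x ->
  clamp lo hi x - u = Num.min (x - u) (hi - u).
Proof.
move=> /andP[lo_u u_hi] u_x; rewrite /clamp max_l ?(le_trans lo_u) //.
case: (leP x hi) => [x_hi|/ltW hi_x]; first by rewrite min_l // lerD2r.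
by rewrite min_r // lerD2r.
Qed.

Lemma clamp_subl lo hi u x : lo <= u <= hi -> x <= u ->
  u - clamp lo hi x = Num.min (u - x) (u - lo).
Proof.
move=> /andP[lo_u u_hi] x_u; rewrite /clamp min_l; last first.
  by rewrite ge_max (le_trans x_u) // (le_trans lo_u).
case: (leP x lo) => [x_lo|/ltW lo_x].
  by rewrite min_r // lerD2l lerN2.
by rewrite min_l // lerD2l lerN2.
Qed.

Lemma min_le_mass_ratio a b z t E S : 0 <= a -> 0 <= b -> `|t| <= E -> E < S ->
  z * (S - t) <= (E + t) / 2 * a + (E - t) / 2 * b ->
  Num.min z b <= (a + b) * E / S.
Proof.
move=> a0 b0 tE ES hz.
have E0 : 0 <= E := le_trans (normr_ge0 t) tE.
have S0 : 0 < S := le_lt_trans E0 ES.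
have := tE; rewrite ler_norml => /andP[Et tE'].
have St : 0 < S - t by lra.
have [bS|Sb] := leP b ((a + b) * E / S); first by rewrite ge_min bS orbT.
rewrite ge_min; apply/orP; left.
rewrite ler_pdivlMr // -(ler_pM2r St); rewrite ltr_pdivrMr // in Sb.
(* With c := S (a - b) / 2 + (a + b) E the goal reduces to t c <= E S (a + b) / 2,
   and b > (a + b) E / S gives |c| <= S (a + b) / 2. *)
have c_le : `|S * (a - b) / 2 + (a + b) * E| <= S * (a + b) / 2.
  have abE0 : 0 <= (a + b) * E by rewrite mulr_ge0 ?addr_ge0.
  have Sa0 : 0 <= S * a by rewrite mulr_ge0 // ltW.
  by rewrite ler_norml; apply/andP; split; lra.
have tc : t * (S * (a - b) / 2 + (a + b) * E) <= E * (S * (a + b) / 2).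
  apply: le_trans (ler_norm _) _; rewrite normrM.
  by apply: ler_pM; rewrite ?normr_ge0.
have : z * (S - t) * S <= ((E + t) / 2 * a + (E - t) / 2 * b) * S.
  by rewrite ler_pM2r.
nra.
Qed.

Lemma clamp_dist_le lo hi u x t E S : lo <= u <= hi -> `|t| <= E -> E < S ->
  (x - u) * (S - t) <= (E + t) / 2 * (u - lo) + (E - t) / 2 * (hi - u) ->
  (u - x) * (S - t) <= (E + t) / 2 * (hi - u) + (E - t) / 2 * (u - lo) ->
  `|u - clamp lo hi x| <= (hi - lo) * E / S.
Proof.
move=> /[dup] u_in /andP[lo_u u_hi] tE ES up low.
have [u_x|/ltW x_u] := leP u x.
  rewrite distrC clamp_subr // ger0_norm; last by rewrite le_min !subr_ge0 u_x.
  have -> : hi - lo = (u - lo) + (hi - u) by ring.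
  by apply: (min_le_mass_ratio (t := t)); rewrite ?subr_ge0.
rewrite clamp_subl // ger0_norm; last by rewrite le_min !subr_ge0 x_u.
have -> : hi - lo = (hi - u) + (u - lo) by ring.
by apply: (min_le_mass_ratio (t := t)); rewrite ?subr_ge0.
Qed.

End Clamp.

Section WeightedAverage.
Variables (R : realFieldType) (N : nat).
Implicit Types (w a ah e x v : 'I_N -> R) (lo hi u : R).

Lemma sqr_sum_le_card_sum_sqr x : (\sum_l x l) ^+ 2 <= N%:R * \sum_l x l ^+ 2.
Proof.
have -> : N%:R * \sum_l x l ^+ 2 = \sum_(l < N) \sum_(k < N) (x l ^+ 2 + x k ^+ 2) / 2.
  rewrite [RHS](eq_bigr (fun l => (N%:R * x l ^+ 2 + \sum_k x k ^+ 2) / 2)); last first.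
    by move=> l _; rewrite -mulr_suml big_split /= sumr_const card_ord mulr_natl.
  rewrite -mulr_suml big_split /= -mulr_sumr sumr_const card_ord -mulr_natl.
  by field.
rewrite expr2 mulr_suml; apply: ler_sum => l _; rewrite mulr_sumr.
by apply: ler_sum => k _; apply: leif_mean_square.
Qed.

Definition wavg w v := (\sum_l w l * v l) / \sum_l w l.

Lemma wavg_in w v lo hi : (forall l, 0 <= w l) -> 0 < \sum_l w l ->
  (forall l, lo <= v l <= hi) -> lo <= wavg w v <= hi.
Proof.
move=> w0 S0 v_in; rewrite ler_pdivlMr // ler_pdivrMr // !mulr_sumr.
apply/andP; split; apply: ler_sum => l _; rewrite mulrC.
  by rewrite ler_wpM2l //; case/andP: (v_in l).
by rewrite ler_wpM2r //; case/andP: (v_in l).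
Qed.

Lemma wavg_sub a ah v : \sum_l a l != 0 -> \sum_l ah l != 0 ->
  (wavg ah v - wavg a v) * \sum_l ah l = \sum_l (a l - ah l) * (wavg a v - v l).
Proof.
move=> Sa Sah; set u := wavg a v.
rewrite [RHS](eq_bigr (fun l => u * a l - a l * v l - (u * ah l - ah l * v l)));
  last by move=> l _ /=; ring.
rewrite !sumrB -!mulr_sumr /u /wavg; field.
by rewrite Sa Sah.
Qed.

Lemma sum_mul_dev_le e v lo hi u : (forall l, lo <= v l <= hi) ->
  \sum_l e l * (u - v l) <=
    (\sum_l `|e l| + \sum_l e l) / 2 * (u - lo)
  + (\sum_l `|e l| - \sum_l e l) / 2 * (hi - u).
Proof.
move=> v_in; rewrite -big_split -sumrB !mulr_suml -big_split /=.
apply: ler_sum => l _; have /andP[lo_v v_hi] := v_in l.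
have [e0|e0] := leP 0 (e l); [rewrite ger0_norm // | rewrite ltr0_norm //]; nra.
Qed.

Lemma clamp_wavg_dist_le a ah v lo hi :
  (forall l, 0 <= a l) -> 0 < \sum_l a l -> (forall l, lo <= v l <= hi) ->
  `|wavg a v - clamp lo hi (wavg ah v)|
    <= (hi - lo) * Num.min ((\sum_l `|a l - ah l|) / \sum_l a l) 1.
Proof.
move=> a0 S0 v_in; set S := \sum_l a l; set E : R := \sum_l `|a l - ah l|.
set t := \sum_l (a l - ah l); set u := wavg a v; set x := wavg ah v.
have /andP[lo_u u_hi] : lo <= u <= hi := wavg_in a0 S0 v_in.
have /andP[c_lo c_hi] : lo <= clamp lo hi x <= hi by apply/clamp_in/(le_trans lo_u).
have [SE|ES] := leP S E.
  rewrite min_r ?mulr1; last by rewrite ler_pdivlMr // mul1r.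
  by rewrite ler_norml; apply/andP; split; lra.
rewrite min_l ?mulrA; last by rewrite ler_pdivrMr // mul1r ltW.
have tE : `|t| <= E by apply: ler_norm_sum.
have Sah : \sum_l ah l = S - t by rewrite /t sumrB opprB addrC subrK.
have Sah0 : \sum_l ah l != 0.
  by rewrite Sah subr_eq0 gt_eqF // (le_lt_trans (ler_norm t)) // (le_lt_trans tE).
have dev := wavg_sub v (lt0r_neq0 S0) Sah0; rewrite -/u -/x Sah in dev.
apply: (clamp_dist_le (t := t)) => //; first by rewrite lo_u.
  by rewrite dev; apply: sum_mul_dev_le.
have vN_in l : - hi <= - v l <= - lo by rewrite !lerN2 andbC.
have := sum_mul_dev_le (fun l => a l - ah l) (- u) vN_in.
have -> : (u - x) * (S - t) = \sum_l (a l - ah l) * (- u - - v l).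
  by rewrite -opprB mulNr dev -sumrN; apply: eq_bigr => l _; ring.
by rewrite !opprK [- u + hi]addrC [- lo + u]addrC.
Qed.

End WeightedAverage.

Lemma sum_norm_le_sqrt_card (R : rcfType) N (x : 'I_N -> R) :
  \sum_l `|x l| <= Num.sqrt N%:R * Num.sqrt (\sum_l x l ^+ 2).
Proof.
rewrite -sqrtrM ?ler0n // -[leLHS]ger0_norm ?sumr_ge0 // -sqrtr_sqr ler_wsqrtr //.
have -> : \sum_l x l ^+ 2 = \sum_l `|x l| ^+ 2.
  by apply: eq_bigr => l _; rewrite real_normK ?num_real.
exact: sqr_sum_le_card_sum_sqr.
Qed.

Lemma invmx_diag (R : fieldType) n (d : 'rV[R]_n) : (forall i, d 0 i != 0) ->
  invmx (diag_mx d) = diag_mx (\row_i (d 0 i)^-1).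
Proof.
move=> d_neq0.
have d_inv : diag_mx d *m diag_mx (\row_i (d 0 i)^-1) = 1%:M.
  rewrite mulmx_diag; apply/matrixP => i j; rewrite !mxE.
  by case: eqP => [->|_]; rewrite ?mulfV ?mulr0n ?mulr0.
have [d_unit _] := mulmx1_unit d_inv.
by rewrite -[RHS](mulKmx d_unit) d_inv mulmx1.
Qed.

Section Matrices.
Variable R : realType.

Lemma rowsum_normalize_entry m n d (M : 'M[R]_(m, n)) (V : 'M[R]_(n, d)) i j :
  (forall i, \sum_l M i l != 0) ->
  (invmx (rowsum_diag M) *m M *m V) i j = wavg (M i) (fun l => V l j).
Proof.
move=> M_neq0; rewrite /rowsum_diag invmx_diag => [|k]; last by rewrite mxE.
rewrite mul_diag_mx mxE /wavg mulrC mulr_sumr; apply: eq_bigr => l _.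
by rewrite !mxE mulrA.
Qed.

Lemma clip_entry m d (M : 'M[R]_(m, d)) (a b : 'rV[R]_d) i j :
  clip M a b i j = clamp (a 0 j) (b 0 j) (M i j).
Proof. by rewrite mxE. Qed.

Lemma maxnorm_le m n (M : 'M[R]_(m, n)) c :
  0 <= c -> (forall i j, `|M i j| <= c) -> maxnorm M <= c.
Proof. by move=> c0 Mc; apply: bigmax_le => // i _; apply: bigmax_le. Qed.

Lemma norm_le_maxnorm m n (M : 'M[R]_(m, n)) i j : `|M i j| <= maxnorm M.
Proof.
apply: le_trans (le_bigmax _ (fun i => \big[Num.max/0]_j `|M i j|) i).
exact: (le_bigmax _ (fun j => `|M i j|)).
Qed.

Lemma colmin_le n d (V : 'M[R]_(n.+1, d)) l j : colmin V 0 j <= V l j.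
Proof. by rewrite mxE; apply: bigmin_le. Qed.

Lemma le_colmax n d (V : 'M[R]_(n.+1, d)) l j : V l j <= colmax V 0 j.
Proof. by rewrite mxE; apply: (le_bigmax _ (fun l => V l j)). Qed.

Lemma colmax_sub_colmin_le n d (V : 'M[R]_(n.+1, d)) j :
  colmax V 0 j - colmin V 0 j <= 2 * maxnorm V.
Proof.
have V_bounds l : - maxnorm V <= V l j /\ V l j <= maxnorm V.
  by apply/andP; rewrite -ler_norml norm_le_maxnorm.
have max_le : colmax V 0 j <= maxnorm V.
  by rewrite mxE; apply: bigmax_le => *; apply: (V_bounds _).2.
have min_ge : - maxnorm V <= colmin V 0 j.
  by rewrite mxE; apply: le_bigmin => *; apply: (V_bounds _).1.
lra.
Qed.

Lemma maxnorm_ge0 m n (M : 'M[R]_(m, n)) : 0 <= maxnorm M.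
Proof. exact: bigmax_ge_id. Qed.

Lemma minentry_le m n (M : 'M[R]_(m.+1, n.+1)) i j : minentry M <= M i j.
Proof. by apply: le_trans (bigmin_le _ i _) _; apply: bigmin_le. Qed.

Lemma minentry_gt0 m n (M : 'M[R]_(m.+1, n.+1)) :
  (forall i j, 0 < M i j) -> 0 < minentry M.
Proof.
move=> M_gt0; have min_gt0 (x y : R) : 0 < x -> 0 < y -> 0 < Num.min x y.
  by move=> x0 y0; rewrite lt_min x0.
have pos_ind N (F : 'I_N -> R) :
    (forall k, 0 < F k) -> 0 < \big[Num.min/M ord0 ord0]_(k < N) F k.
  by move=> F_gt0; apply: (big_ind (fun x => 0 < x)).
by apply: (pos_ind) => i; apply: pos_ind.
Qed.

Lemma card_mul_minentry_le_rowsum m n (M : 'M[R]_(m.+1, n.+1)) i :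
  n.+1%:R * minentry M <= \sum_l M i l.
Proof.
rewrite mulr_natl -[n.+1 in leLHS]card_ord -sumr_const.
by apply: ler_sum => l _; apply: minentry_le.
Qed.

Lemma norm2inf_ge0 m n (M : 'M[R]_(m, n)) : 0 <= norm2inf M.
Proof. exact: bigmax_ge_id. Qed.

Lemma row_norm_le_norm2inf m n (M : 'M[R]_(m, n)) i :
  Num.sqrt (\sum_j M i j ^+ 2) <= norm2inf M.
Proof. exact: (le_bigmax _ (fun i => Num.sqrt (\sum_j M i j ^+ 2))). Qed.

Lemma rowsum_ratio_le m n (A B : 'M[R]_(m.+1, n.+1)) i : 0 < minentry A ->
  (\sum_l `|B i l|) / (\sum_l A i l)
    <= norm2inf B / (Num.sqrt n.+1%:R * minentry A).
Proof.
move=> mu_gt0; set mu := minentry A; set s := Num.sqrt n.+1%:R.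
have s_gt0 : 0 < s by rewrite sqrtr_gt0 ltr0n.
have S_ge := card_mul_minentry_le_rowsum A i; rewrite -/mu in S_ge.
have S_gt0 : 0 < \sum_l A i l by apply: lt_le_trans S_ge; rewrite mulr_gt0 ?ltr0n.
rewrite ler_pdivrMr //; apply: le_trans (sum_norm_le_sqrt_card _) _.
apply: le_trans (ler_wpM2l (ltW s_gt0) (row_norm_le_norm2inf B i)) _.
apply: le_trans (ler_wpM2l _ S_ge); last first.
  by rewrite divr_ge0 ?norm2inf_ge0 // mulr_ge0 // ltW.
have -> : n.+1%:R = s ^+ 2 by rewrite sqr_sqrtr ?ler0n.
suff -> : norm2inf B / (s * mu) * (s ^+ 2 * mu) = s * norm2inf B by [].
by field; rewrite !gt_eqF.
Qed.
Lemma softmax_clip_entry_le m n d (A Ahat : 'M[R]_(m, n.+1)) (V : 'M[R]_(n.+1, d))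
    rho i j :
  (forall i l, 0 <= A i l) -> (forall i, 0 < \sum_l A i l) ->
  (forall i, (\sum_l `|(A - Ahat) i l|) / \sum_l A i l <= rho) ->
  `|(invmx (rowsum_diag A) *m A *m V
     - clip (invmx (rowsum_diag Ahat) *m Ahat *m V) (colmin V) (colmax V)) i j|
    <= (colmax V 0 j - colmin V 0 j) * Num.min rho 1.
Proof.
move=> A_ge0 S_gt0 err_le.
have V_in l : colmin V 0 j <= V l j <= colmax V 0 j by rewrite colmin_le le_colmax.
have row_err_le k : (\sum_l `|A k l - Ahat k l|) / \sum_l A k l <= rho.
  by have := err_le k; under eq_bigr do rewrite !mxE.
set X := invmx (rowsum_diag Ahat) *m Ahat *m V.
rewrite [(_ - clip X _ _) i j]mxE [(- clip X _ _) i j]mxE clip_entry.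
rewrite rowsum_normalize_entry => [|k]; last by rewrite gt_eqF.
(* A row of Ahat summing to 0 makes invmx return junk, but that row has
   relative error at least 1, so then the box bound suffices. *)
have [Ahat_neq0|] := boolP [forall k, \sum_l Ahat k l != 0].
  rewrite rowsum_normalize_entry => [|k]; last by move/forallP: Ahat_neq0.
  apply: le_trans (clamp_wavg_dist_le _ (A_ge0 i) (S_gt0 i) V_in) _.
  rewrite ler_wpM2l ?le_min2 // subr_ge0.
  exact: le_trans (colmin_le V ord0 j) (le_colmax V ord0 j).
rewrite negb_forall => /existsP[k]; rewrite negbK => /eqP Ahat0.
have -> : Num.min rho 1 = 1.
  apply/min_r; apply: le_trans (row_err_le k); rewrite ler_pdivlMr // mul1r.
  apply: le_trans (ler_norm_sum _ _ _); rewrite sumrB Ahat0 subr0 ger0_norm //.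
  exact: ltW.
have /andP[lo_u u_hi] := wavg_in (A_ge0 i) (S_gt0 i) V_in.
have /andP[lo_c c_hi] := clamp_in (X i j) (le_trans lo_u u_hi).
by rewrite mulr1 ler_norml; apply/andP; split; lra.
Qed.

End Matrices.

Theorem lemma1 (R : realType) (m n d : nat) (beta : R)
    (Q : 'M[R]_(m.+1, d)) (K V : 'M[R]_(n.+1, d)) (Ahat : 'M[R]_(m.+1, n.+1)) :
  0 < beta ->
  let A := attn beta Q K in
  let D := rowsum_diag A in
  let O := invmx D *m A *m V in
  let Dhat := rowsum_diag Ahat in
  let Ohat := clip (invmx Dhat *m Ahat *m V) (colmin V) (colmax V) in
  maxnorm (O - Ohat) <=
    maxnorm V * Num.min
      ((3 / Num.sqrt (n.+1)%:R) * norm2inf (A - Ahat) / minentry A) 2.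
Proof.
move=> _; cbv zeta; set A := attn beta Q K.
set rho := norm2inf (A - Ahat) / (Num.sqrt n.+1%:R * minentry A).
have A_gt0 i l : 0 < A i l by rewrite mxE expR_gt0.
have mu_gt0 : 0 < minentry A := minentry_gt0 A_gt0.
have rowsum_gt0 i : 0 < \sum_l A i l.
  by apply: lt_le_trans (card_mul_minentry_le_rowsum A i); rewrite mulr_gt0.
have s_gt0 : 0 < Num.sqrt n.+1%:R :> R by rewrite sqrtr_gt0 ltr0n.
have rho_ge0 : 0 <= rho by rewrite divr_ge0 ?norm2inf_ge0 // mulr_ge0 // ltW.
have -> : 3 / Num.sqrt n.+1%:R * norm2inf (A - Ahat) / minentry A = 3 * rho.
  by rewrite /rho; field; rewrite !gt_eqF.
have entry_le i j := softmax_clip_entry_le V i j (fun i l => ltW (A_gt0 i l))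
  rowsum_gt0 (fun i => rowsum_ratio_le (A - Ahat) i mu_gt0).
apply: maxnorm_le => [|i j].
  by rewrite mulr_ge0 ?maxnorm_ge0 // le_min mulr_ge0 ?ler0n.
apply: le_trans (entry_le i j) _.
apply: le_trans (ler_wpM2r _ (colmax_sub_colmin_le V j)) _.
  by rewrite le_min rho_ge0 ler01.
rewrite -/rho mulrAC [leRHS]mulrC; apply: ler_wpM2r; first exact: maxnorm_ge0.
by case: (leP rho 1) => rho1; case: (leP (3 * rho) 2) => rho2; lra.
Qed.
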